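(* For any $h\in BV([0,1];\mathbb R^d)$ and $g\in D([0,1];\mathbb R^d)$, $$\int_0^1|g(s)-h(s)|ds\le 2d(\operatorname{Var}(h)-|h(0)|+1)\rho_2(g,h)+\pi d\,\rho_2^2(g,h)$$ and $$\int_0^1|g(s)-h(s)|ds\le 2d(\operatorname{Var}(h)+1)\rho_2'(g,h)+\pi d\,(\rho_2')^2(g,h).$$
   Context: $D([0,1];\mathbb R^d)$ is the set of càdlàg functions $[0,1]\to\mathbb R^d$; $|\cdot|$ is the Euclidean norm. For $h\in D$ and finite $\mathbf t\subset(0,1]$, $h^{\mathbf t}$ is the continuous function linear between consecutive points of $\mathbf t\cup\{0,1\}$ with $h^{\mathbf t}(0)=0$, $h^{\mathbf t}(s)=h(s)$ for $s\in\mathbf t\cup\{1\}$; $\operatorname{Var}(h):=\sup_{\mathbf t}\int_0^1|(h^{\mathbf t})'|ds$ over finite $\mathbf t\subset(0,1]$, and $BV=\{h\in D:\operatorname{Var}(h)<\infty\}$. Completed graph: $\Gamma h:=\{(t,x)\in[0,1]\times\mathbb R^d: x\in[h(t-),h(t)]\}$ with the convention $h(0-):=h(0)$ ($[a,b]$ the line segment); modified completed graph $\Gamma'h$: the same but with the convention $h(0-):=0$ (so $\Gamma'h=\Gamma h\cup(\{0\}\times[0,h(0)])$). $\rho_2(g,h)$ is the Hausdorff distance between $\Gamma g$ and $\Gamma h$ in $\mathbb R^{d+1}$, and $\rho_2'(g,h)$ is the Hausdorff distance between $\Gamma'g$ and $\Gamma'h$. *)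

From mathcomp Require Import all_boot all_order all_algebra.
From mathcomp Require Import all_classical all_reals all_analysis.
Set Implicit Arguments. Unset Strict Implicit. Unset Printing Implicit Defensive.
Import Order.TTheory GRing.Theory Num.Theory.
Import numFieldNormedType.Exports.
Local Open Scope classical_set_scope.
Local Open Scope ring_scope.

Section Defs.
Variables (R : realType) (d : nat).

Definition eucl (v : 'rV[R]_d) : R := Num.sqrt (\sum_(i < d) v ord0 i ^+ 2).

Definition dist1 (p q : R * 'rV[R]_d) : R :=
  Num.sqrt ((p.1 - q.1) ^+ 2 + \sum_(i < d) (p.2 ord0 i - q.2 ord0 i) ^+ 2).

Definition cadlag (h : R -> 'rV[R]_d) : Prop :=
  (forall t, 0 <= t < 1 -> h x @[x --> t^'+] --> h t) /\
  (forall t, 0 < t <= 1 -> cvg (h x @[x --> t^'-])).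

Definition leftlim (h : R -> 'rV[R]_d) (t : R) : 'rV[R]_d :=
  if t == 0 then h 0 else lim (h x @[x --> t^'-]).

Definition leftlim' (h : R -> 'rV[R]_d) (t : R) : 'rV[R]_d :=
  if t == 0 then 0 else lim (h x @[x --> t^'-]).

Definition segment (a b : 'rV[R]_d) : set 'rV[R]_d :=
  [set a + l *: (b - a) | l in `[0, 1]%classic].

Definition cgraph_with (hm : R -> 'rV[R]_d) (h : R -> 'rV[R]_d)
  : set (R * 'rV[R]_d) :=
  [set p | 0 <= p.1 <= 1 /\ segment (hm p.1) (h p.1) p.2].

Definition cgraph (h : R -> 'rV[R]_d) := cgraph_with (leftlim h) h.
Definition cgraph' (h : R -> 'rV[R]_d) := cgraph_with (leftlim' h) h.

Definition hausdorff (A B : set (R * 'rV[R]_d)) : \bar R :=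
  maxe (ereal_sup [set ereal_inf [set (dist1 p q)%:E | q in B] | p in A])
       (ereal_sup [set ereal_inf [set (dist1 p q)%:E | p in A] | q in B]).

Definition rho2 (g h : R -> 'rV[R]_d) : \bar R := hausdorff (cgraph g) (cgraph h).
Definition rho2' (g h : R -> 'rV[R]_d) : \bar R := hausdorff (cgraph' g) (cgraph' h).

(* For a finite t ⊂ (0,1], listed increasingly as s, ∫_0^1 |(h^t)'| equals the
   length of the polygon 0 -> h(t_1) -> ... -> h(t_k) -> h(1). *)
Definition poly_length (h : R -> 'rV[R]_d) (s : seq R) : R :=
  \sum_(x <- pairmap (fun a b => eucl (b - a)) 0 [seq h u | u <- rcons s 1]) x.

Definition admissible_pts (s : seq R) : Prop :=
  sorted <%R s /\ all (fun u => (0 < u) && (u <= 1)) s.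

Definition Var (h : R -> 'rV[R]_d) : \bar R :=
  ereal_sup [set (poly_length h s)%:E | s in admissible_pts].

Definition BV (h : R -> 'rV[R]_d) : Prop := cadlag h /\ (Var h < +oo)%E.

End Defs.

(* Let z be h(0-) in the chosen convention (h 0 for rho2, 0 for rho2') and let w be
   |z| on (-oo, 0) and, on [0, 1], the largest length of a polygon
   0 -> h t_1 -> ... -> h t_k -> h x with 0 < t_1 < ... < t_k < x (|h 0| at x = 0),
   frozen after 1.  Then w is nondecreasing with values in [|z|, Var h], and
   |h b - h a| <= w b - w a, also with h a replaced by z when a < 0.
   If rho < r, a point (s, g s) is within r of a point y on a segment of the completed
   graph of h at a time t with |t - s| < r; both ends of that segment are within
   w (s + r) - w (s - r) of h s in the sup norm, hence
   |g s - h s| <= d (r + w (s + r) - w (s - r)).  The integral of the oscillation term is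
   at most 2 r (Var h - |z|); as g need not be measurable, it is bounded by upper sums
   on a mesh 1/N.  Letting N -> oo and r -> rho gives
   int |g - h| <= d (1 + 2 (Var h - |z|)) rho, which implies both inequalities. *)

From mathcomp Require Import all_boot all_order all_algebra.
From mathcomp Require Import all_classical all_reals all_analysis.
From mathcomp Require Import ring lra zify.
Import Order.TTheory GRing.Theory Num.Theory.
Import numFieldNormedType.Exports.
Local Open Scope classical_set_scope.
Local Open Scope ring_scope.

Set Implicit Arguments. Unset Strict Implicit. Unset Printing Implicit Defensive.

Section EuclideanNorm.
Variables (R : realType) (d : nat).
Implicit Types v : 'rV[R]_d.

Lemma eucl_ge0 v : 0 <= eucl v.
Proof. exact: sqrtr_ge0. Qed.

Lemma eucl0 : eucl (0 : 'rV[R]_d) = 0.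
Proof. by rewrite /eucl big1 ?sqrtr0// => i _; rewrite mxE expr0n. Qed.

Lemma coord_le_eucl v i : `|v ord0 i| <= eucl v.
Proof.
rewrite -sqrtr_sqr ler_wsqrtr// (bigD1 i)//= lerDl.
by apply: sumr_ge0 => j _; rewrite sqr_ge0.
Qed.

Lemma normr_rV v : `|v| = \big[Num.max/0]_ij `|v ij.1 ij.2|.
Proof. exact: mx_normrE. Qed.

Lemma normr_le_eucl v : `|v| <= eucl v.
Proof.
rewrite normr_rV; apply: bigmax_le => [|[i j] _]; first exact: eucl_ge0.
by rewrite [i]ord1; exact: coord_le_eucl.
Qed.

Lemma eucl_le_normr v : eucl v <= d%:R * `|v|.
Proof.
have coord_le i : v ord0 i ^+ 2 <= `|v| ^+ 2.
  rewrite -real_normK ?num_real// lerXn2r ?nnegrE//.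
  by rewrite normr_rV (le_bigmax _ (fun ij => `|v ij.1 ij.2|) (ord0, i)).
have d_le_sqr : d%:R <= (d%:R : R) ^+ 2.
  by case: (d) => [|n]; rewrite ?expr0n// expr2 ler_peMl// ler1n.
rewrite -(ger0_norm (mulr_ge0 (ler0n _ d) (normr_ge0 v))) -sqrtr_sqr ler_wsqrtr//.
apply: le_trans (ler_sum _ (fun i _ => coord_le i)) _.
rewrite sumr_const card_ord exprMn -[X in X <= _]mulr_natl.
by apply: ler_wpM2r => //; exact: sqr_ge0.
Qed.

Lemma eucl_continuous : continuous (@eucl R d).
Proof.
move=> v; apply: continuous_comp; last exact: sqrt_continuous.
apply: cvg_big => [||i _]; [exact: add_continuous | exact: nbhs_filter |].
have coord_v := @coord_continuous R 1 d ord0 i v.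
exact: (cvgM coord_v coord_v).
Qed.

End EuclideanNorm.

Section Geometry.
Variables (R : realType) (d : nat).
Implicit Types (p q : R * 'rV[R]_d) (A B : set (R * 'rV[R]_d)).

Lemma distr_le_dist1 p q : `|p.1 - q.1| <= dist1 p q.
Proof.
rewrite -sqrtr_sqr ler_wsqrtr// lerDl.
by apply: sumr_ge0 => i _; exact: sqr_ge0.
Qed.

Lemma normr_le_dist1 p q : `|p.2 - q.2| <= dist1 p q.
Proof.
apply: le_trans (normr_le_eucl _) _; rewrite ler_wsqrtr//.
by under eq_bigr do rewrite !mxE; rewrite lerDr sqr_ge0.
Qed.

Lemma segment_end (a b : 'rV[R]_d) : segment a b b.
Proof. by exists 1; [rewrite /= in_itv/= ler01 lexx | rewrite scale1r addrC subrK]. Qed.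

Lemma segment_dist_le (a b x y : 'rV[R]_d) e :
  `|a - x| <= e -> `|b - x| <= e -> segment a b y -> `|y - x| <= e.
Proof.
move=> ax bx [l l01 <-{y}].
have /andP[l0 l1] : (0 <= l) && (l <= 1) by move: l01; rewrite /= in_itv.
have -> : a + l *: (b - a) - x = (1 - l) *: (a - x) + l *: (b - x).
  by apply/rowP => i; rewrite !mxE; ring.
apply: le_trans (ler_normD _ _) _.
rewrite !normrZ ger0_norm ?subr_ge0// ger0_norm//.
apply: le_trans (lerD (ler_wpM2l _ ax) (ler_wpM2l l0 bx)) _; first by rewrite subr_ge0.
by rewrite -mulrDl subrK mul1r.
Qed.

Lemma hausdorff_ge0 A B p : A p -> (0 <= hausdorff A B)%E.
Proof.
move=> Ap; rewrite /hausdorff le_max; apply/orP; left.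
apply: le_trans (ereal_sup_ubound (ex_intro2 _ _ p Ap erefl)).
by apply: le_ereal_inf_tmp => _ [q _ <-]; rewrite lee_fin sqrtr_ge0.
Qed.

Lemma hausdorff_lt A B p r : A p -> (hausdorff A B < r%:E)%E ->
  exists2 q, B q & dist1 p q < r.
Proof.
move=> Ap AB_r.
have : (ereal_inf [set (dist1 p q)%:E | q in B] < r%:E)%E.
  apply: le_lt_trans AB_r; rewrite /hausdorff le_max; apply/orP; left.
  by apply: ereal_sup_ubound; exists p.
by case/ereal_inf_lt => _ [q Bq <-]; rewrite lte_fin; exists q.
Qed.

End Geometry.

Section IntegralBounds.
Variable R : realType.
Local Notation mu := (@lebesgue_measure R).

Lemma ge0_le_integral_nonmeasurable (D : set R) (f1 f2 : R -> \bar R) :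
  (forall x, D x -> (0 <= f1 x)%E) -> (forall x, D x -> (f1 x <= f2 x)%E) ->
  (\int[mu]_(x in D) f1 x <= \int[mu]_(x in D) f2 x)%E.
Proof.
move=> f1_ge0 f1_le.
have f2_ge0 x : D x -> (0 <= f2 x)%E.
  by move=> Dx; exact: le_trans (f1_ge0 x Dx) (f1_le x Dx).
rewrite (ge0_integralE mu f1_ge0) (ge0_integralE mu f2_ge0).
apply: le_ereal_sup => _ [g g_le <-]; exists g => //= x.
apply: le_trans (g_le x) _; rewrite /patch; case: ifP => // /set_mem Dx.
exact: f1_le.
Qed.

Lemma exists_mesh_piece (N : nat) (s : R) : (0 < N)%N -> 0 <= s <= 1 ->
  exists2 j, (j < N)%N & j%:R / N%:R <= s <= j.+1%:R / N%:R.
Proof.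
move=> N_gt0 /andP[s0 s1]; have NR_gt0 : (0 : R) < N%:R by rewrite ltr0n.
have sN0 : 0 <= s * N%:R by rewrite mulr_ge0.
case: (ltnP (Num.trunc (s * N%:R)) N) => [jN|Nj].
  exists (Num.trunc (s * N%:R)) => //.
  by rewrite ler_pdivrMr// ler_pdivlMr// truncn_le sN0 ltW// truncnS_gt.
exists N.-1; first by rewrite ltn_predL.
rewrite prednK// divff ?gt_eqF// s1 andbT ler_pdivrMr//.
apply: le_trans (_ : (Num.trunc (s * N%:R))%:R <= _); last by rewrite truncn_le.
by rewrite ler_nat (leq_trans _ Nj)// leq_pred.
Qed.

Lemma integral01_indic_piece (N j : nat) (b : R) : (0 < N)%N -> 0 <= b ->
  (\int[mu]_(x in `[0%R, 1%R]) (b * \1_[set` `[j%:R / N%:R, j.+1%:R / N%:R]] x)%:E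
     <= (b / N%:R)%:E)%E.
Proof.
move=> N_gt0 b0; set P := [set` `[j%:R / N%:R, _]].
have mP : measurable P by exact: measurable_itv.
have -> : (\int[mu]_(x in `[0%R, 1%R]) (b * \1_P x)%:E =
           b%:E * \int[mu]_(x in `[0%R, 1%R]) (\1_P x)%:E)%E.
  under eq_integral do rewrite EFinM.
  apply: ge0_integralZl_EFin => //.
  by apply/measurable_realfun.measurable_EFinP; exact: measurable_realfun.measurable_indic.
rewrite integral_indic// EFinM; apply: lee_pmul => //.
apply: le_trans (measureIl _ _ _) _ => //; rewrite /P /= lebesgue_measure_itv/= lte_fin.
rewrite ltr_pM2r ?invr_gt0 ?ltr0n// ltr_nat ltnSn -EFinD lee_fin.
by rewrite -mulrBl -natrB// subSnn mul1r.
Qed.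

Lemma integral01_le_upper_sum (F : R -> R) (b : nat -> R) (N : nat) : (0 < N)%N ->
  (forall s, 0 <= s <= 1 -> 0 <= F s) ->
  (forall j s, (j < N)%N -> j%:R / N%:R <= s <= j.+1%:R / N%:R -> F s <= b j) ->
  (\int[mu]_(s in `[0%R, 1%R]) (F s)%:E <= (\sum_(j < N) b j / N%:R)%:E)%E.
Proof.
move=> N_gt0 F_ge0 F_le_b; have NR_gt0 : (0 : R) < N%:R by rewrite ltr0n.
pose P j := [set` `[j%:R / N%:R, j.+1%:R / N%:R]] : set R.
have b_ge0 (j : 'I_N) : 0 <= b j.
  have jN : j%:R / N%:R <= 1 :> R by rewrite ler_pdivrMr// mul1r ler_nat ltnW.
  apply: le_trans (F_ge0 (j%:R / N%:R) _) (F_le_b j _ (ltn_ord j) _).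
    by rewrite divr_ge0// jN.
  by rewrite lexx ler_pM2r ?invr_gt0// ler_nat leqnSn.
have F_le s : 0 <= s <= 1 -> F s <= \sum_(j < N) b j * \1_(P j) s.
  move=> s01; have [j jN js] := exists_mesh_piece N_gt0 s01.
  rewrite (bigD1 (Ordinal jN))//= indicE mem_set ?mulr1; last by rewrite /P/= in_itv.
  apply: le_trans (F_le_b j s jN js) _; rewrite lerDl.
  by apply: sumr_ge0 => i _; rewrite mulr_ge0.
apply: le_trans (ge0_le_integral_nonmeasurable
  (f2 := fun s => (\sum_(j < N) b j * \1_(P j) s)%:E) _ _) _.
- by move=> s; rewrite /= in_itv/= => s01; rewrite lee_fin F_ge0.
- by move=> s; rewrite /= in_itv/= => s01; rewrite lee_fin F_le.
under eq_integral do rewrite -sumEFin.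
rewrite ge0_integral_sum//; last 2 first.
- move=> j; apply/measurable_realfun.measurable_EFinP.
  apply: measurable_realfun.measurable_funM; first exact: measurable_cst.
  by apply: measurable_realfun.measurable_indic; exact: measurable_itv.
- by move=> j s _; rewrite lee_fin mulr_ge0.
rewrite -sumEFin; apply: lee_sum => j _; exact: integral01_indic_piece.
Qed.

Lemma sumr_shiftB (V : zmodType) (a : nat -> V) (N M : nat) :
  \sum_(j < N) (a (j + M)%N - a j) = \sum_(i < M) (a (N + i)%N - a i).
Proof.
have tele n (f : nat -> V) : \sum_(i < n) (f i.+1 - f i) = f n - f 0%N.
  by rewrite -(big_mkord xpredT (fun i => f i.+1 - f i)) telescope_sumr.
transitivity (\sum_(j < N) \sum_(i < M) (a (j + i.+1)%N - a (j + i)%N)).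
  by apply: eq_bigr => j _; have /= -> := tele M (fun i => a (j + i)%N); rewrite addn0.
rewrite exchange_big; apply: eq_bigr => i _.
have /= := tele N (fun j => a (j + i)%N); rewrite add0n => <-.
by apply: eq_bigr => j _; rewrite addnS addSn.
Qed.

Lemma integral01_le_oscillation (F w : R -> R) (c v D r : R) (N k : nat) :
  {homo w : x y / x <= y} -> (forall x, c <= w x <= v) -> 0 <= D ->
  (0 < N)%N -> r <= k%:R / N%:R ->
  (forall s, 0 <= s <= 1 -> 0 <= F s <= D * (r + (w (s + r) - w (s - r)))) ->
  (\int[mu]_(s in `[0%R, 1%R]) (F s)%:E <=
     (D * (r + (2 * k + 1)%N%:R / N%:R * (v - c)))%:E)%E.
Proof.
move=> w_nd w_bnd D0 N_gt0 rk F_bnd; have NR_gt0 : (0 : R) < N%:R by rewrite ltr0n.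
pose M := (2 * k + 1)%N; pose a m := w ((m%:R - k%:R) / N%:R).
apply: le_trans (integral01_le_upper_sum (b := fun j => D * (r + (a (j + M)%N - a j)))
  N_gt0 (fun s s01 => (andP (F_bnd s s01)).1) _) _.
  move=> j s jN /andP[js sj].
  have s01 : 0 <= s <= 1.
    rewrite (le_trans _ js) ?divr_ge0// (le_trans sj)//.
    by rewrite ler_pdivrMr// mul1r ler_nat.
  apply: le_trans (andP (F_bnd s s01)).2 _.
  apply: ler_wpM2l => //; rewrite lerD2l; apply: lerB; apply: w_nd.
    apply: le_trans (lerD sj rk) _; rewrite -mulrDl ler_pM2r ?invr_gt0//.
    by rewrite lerBrDr -!natrD ler_nat /M; lia.
  by apply: le_trans (lerB js rk); rewrite mulrBl.
rewrite lee_fin -mulr_suml -mulr_sumr big_split/= sumr_const card_ord -[r *+ N]mulr_natr.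
rewrite sumr_shiftB.
have osc : \sum_(i < M) (a (N + i)%N - a i) <= M%:R * (v - c).
  apply: le_trans (ler_sum _ (fun i _ => lerB (andP (w_bnd _)).2 (andP (w_bnd _)).1)) _.
  by rewrite sumr_const card_ord mulr_natl.
rewrite ler_pdivrMr// -[X in _ <= X]mulrA; apply: ler_wpM2l => //.
have -> : (r + M%:R / N%:R * (v - c)) * N%:R = r * N%:R + M%:R * (v - c).
  by field; rewrite (gt_eqF NR_gt0).
by rewrite lerD2l.
Qed.

End IntegralBounds.

Section ExtendedLimits.
Variable R : realType.
Implicit Types (L rho : \bar R) (a b c : R).

Lemma lee_of_forall_divn L a b : 0 <= b ->
  (forall N, (0 < N)%N -> (L <= (a + b / N%:R)%:E)%E) -> (L <= a%:E)%E.
Proof.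
move=> b0 L_le; apply/lee_addgt0Pr => e e0.
pose N := (Num.trunc (b / e)).+1.
apply: le_trans (L_le N isT) _; rewrite lee_fin lerD2l ler_pdivrMr ?ltr0n//.
by rewrite mulrC -ler_pdivrMr// ltW// truncnS_gt.
Qed.

Lemma lee_mul_of_forall_gt L rho c : 0 < c -> (0 <= rho)%E ->
  (forall r, (rho < r%:E)%E -> (L <= (c * r)%:E)%E) -> (L <= c%:E * rho)%E.
Proof.
move=> c0; case: rho => [rho | |] rho0 L_le; last by [].
- apply/lee_addgt0Pr => e e0; rewrite -EFinM -EFinD.
  have := L_le (rho + e / c); rewrite lte_fin ltrDl divr_gt0// => /(_ isT).
  by rewrite mulrDr mulrCA divff ?gt_eqF// mulr1.
- by rewrite gt0_muley ?lte_fin// leey.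
Qed.

End ExtendedLimits.

Section ControlledPath.
Variables (R : realType) (d : nat) (h : R -> 'rV[R]_d) (w : R -> R) (z : 'rV[R]_d).
Hypothesis w_nd : {homo w : x y / x <= y}.
Hypothesis h_incr : forall a b, 0 <= a -> a <= b -> b <= 1 -> `|h b - h a| <= w b - w a.
Hypothesis z_incr : forall a b, a < 0 -> 0 <= b -> b <= 1 -> `|h b - z| <= w b - w a.
Hypothesis h_leftlim : forall t, 0 < t <= 1 -> cvg (h x @[x --> t^'-]).
Variable hm : R -> 'rV[R]_d.
Hypothesis hm0 : hm 0 = z.
Hypothesis hmE : forall t, 0 < t -> hm t = lim (h x @[x --> t^'-]).

Local Notation osc s r := (w (s + r) - w (s - r)).

Lemma controlled_near s t r : 0 <= s <= 1 -> 0 <= t <= 1 -> `|t - s| < r ->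
  `|h t - h s| <= osc s r.
Proof.
move=> /andP[s0 s1] /andP[t0 t1]; rewrite distrC ltr_distlC => /andP[srt tsr].
have [st|ts] := leP s t.
  by apply: le_trans (h_incr s0 st t1) _; apply: lerB; apply: w_nd; lra.
rewrite distrC; apply: le_trans (h_incr t0 (ltW ts) s1) _.
by apply: lerB; apply: w_nd; lra.
Qed.

Lemma controlled_start s r : 0 <= s <= 1 -> s < r -> `|z - h s| <= osc s r.
Proof.
move=> /andP[s0 s1] sr; rewrite distrC.
apply: le_trans (z_incr (a := s - r) _ s0 s1) _; first lra.
by rewrite lerD2r; apply: w_nd; lra.
Qed.

Lemma controlled_leftlim s t r : 0 <= s <= 1 -> 0 < t <= 1 -> `|t - s| < r ->
  `|lim (h x @[x --> t^'-]) - h s| <= osc s r.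
Proof.
move=> s01 t01; rewrite distrC ltr_distlC => /andP[srt tsr].
have [t0 t1] := andP t01.
apply: cvgr_to_le (cvg_norm (cvgB (h_leftlim t01) (cvg_cst (h s)))) _.
near=> x.
have x0 : 0 < x by near: x; exact: nbhs_left_gt.
have xt : x < t by near: x; exact: nbhs_left_lt.
have srx : s - r < x by near: x; exact: nbhs_left_gt.
apply: controlled_near => //; first by rewrite ltW//= (le_trans (ltW xt)).
by rewrite distrC ltr_distlC srx (lt_trans xt).
Unshelve. all: by end_near.
Qed.

Lemma controlled_cgraph s t y r : cgraph_with hm h (t, y) -> 0 <= s <= 1 ->
  `|t - s| < r -> `|y - h s| <= osc s r.
Proof.
move=> [/= t01 t_seg] s01 ts; apply: segment_dist_le t_seg; last first.
  exact: controlled_near.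
have [t0 t1] := andP t01; move: t0; rewrite le_eqVlt => /predU1P[t0|t0].
  rewrite -t0 hm0; apply: controlled_start => //.
  by move: ts; rewrite -t0 sub0r normrN; exact: le_lt_trans (ler_norm s).
by rewrite hmE//; apply: controlled_leftlim; rewrite ?t0.
Qed.

Variables (g : R -> 'rV[R]_d) (A : set (R * 'rV[R]_d)) (c V : R).
Hypothesis A_graph : forall s, 0 <= s <= 1 -> A (s, g s).
Hypothesis w_bnd : forall x, c <= w x <= V.

Local Notation rho := (hausdorff A (cgraph_with hm h)).
Local Notation L := (\int[lebesgue_measure]_(s in `[0%R, 1%R]) (eucl (g s - h s))%:E)%E.

Lemma rho_ge0 : (0 <= rho)%E.
Proof. by apply: (hausdorff_ge0 _ (A_graph (s := 0) _)); rewrite lexx ler01. Qed.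

Lemma eucl_le_osc r s : (rho < r%:E)%E -> 0 <= s <= 1 ->
  eucl (g s - h s) <= d%:R * (r + osc s r).
Proof.
move=> rho_r s01; have [[t y] graph_ty dist_lt] := hausdorff_lt (A_graph s01) rho_r.
apply: le_trans (eucl_le_normr _) _; apply: ler_wpM2l => //.
have -> : g s - h s = (g s - y) + (y - h s) by rewrite addrA subrK.
apply: le_trans (ler_normD _ _) (lerD _ _).
  exact: ltW (le_lt_trans (normr_le_dist1 (s, g s) (t, y)) dist_lt).
apply: controlled_cgraph graph_ty s01 _; rewrite distrC.
exact: le_lt_trans (distr_le_dist1 (s, g s) (t, y)) dist_lt.
Qed.

Lemma integral_le_rho : (L <= (d%:R * (1 + 2 * (V - c)))%:E * rho)%E.
Proof.
have rho0 := rho_ge0.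
have X0 : 0 <= V - c by have /andP[lo hi] := w_bnd 0; lra.
have [d0|d_gt0] := eqVneq d 0%N.
  (* [0 * rho] vanishes even when [rho = +oo]. *)
  have dR0 : d%:R = 0 :> R by rewrite d0.
  rewrite dR0 mul0r mul0e -(integral0 lebesgue_measure `[0%R, 1%R]).
  apply: ge0_le_integral_nonmeasurable => s _; rewrite lee_fin ?eucl_ge0//.
  by have := eucl_le_normr (g s - h s); rewrite dR0 mul0r.
have dR_gt0 : 0 < d%:R :> R by rewrite ltr0n lt0n.
apply: lee_mul_of_forall_gt => // [|r rho_r]; first by rewrite mulr_gt0//; lra.
have r0 : 0 <= r by rewrite -lee_fin (le_trans rho0 (ltW rho_r)).
apply: (lee_of_forall_divn (b := 3 * d%:R * (V - c))) => [|N N_gt0].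
  by rewrite !mulr_ge0.
have NR_gt0 : 0 < N%:R :> R by rewrite ltr0n.
pose k := (Num.trunc (r * N%:R)).+1.
have rk : r <= k%:R / N%:R by rewrite ler_pdivlMr// ltW// truncnS_gt.
have kN : k%:R <= r * N%:R + 1.
  by rewrite /k -addn1 natrD lerD2r truncn_le mulr_ge0.
apply: le_trans (integral01_le_oscillation (F := fun s => eucl (g s - h s))
  w_nd w_bnd (ler0n _ d) N_gt0 rk _) _.
  by move=> s s01; rewrite eucl_ge0 eucl_le_osc.
have mesh : (2 * k + 1)%N%:R / N%:R <= 2 * r + 3 / N%:R.
  rewrite ler_pdivrMr// mulrDl divfK ?gt_eqF// natrD natrM; lra.
rewrite lee_fin [X in _ <= X](_ : _ = d%:R * (r + (2 * r + 3 / N%:R) * (V - c))).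
  by apply: ler_wpM2l => //; rewrite lerD2l; exact: ler_wpM2r.
by ring.
Qed.

Lemma integral_le_hausdorff :
  (L <= (2 * d%:R)%:E * ((V - c)%:E + 1) * rho + (pi * d%:R)%:E * rho ^+ 2)%E.
Proof.
have rho0 := rho_ge0.
apply: le_trans integral_le_rho _; apply: lee_paddr.
  by apply: mule_ge0; [rewrite lee_fin mulr_ge0// pi_ge0 | exact: expe_ge0].
rewrite -EFinD -EFinM; apply: lee_wpmul2r => //; rewrite lee_fin.
have -> : 2 * d%:R * (V - c + 1) = d%:R * (1 + 2 * (V - c)) + d%:R :> R by ring.
by rewrite lerDl.
Qed.

End ControlledPath.

Section PrefixVariation.
Variables (R : realType) (d : nat) (h : R -> 'rV[R]_d) (V : R).

Definition chain (z : 'rV[R]_d) (xs : seq 'rV[R]_d) : R :=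
  \sum_(x <- pairmap (fun a b => eucl (b - a)) z xs) x.

Lemma chain_cons z x xs : chain z (x :: xs) = eucl (x - z) + chain x xs.
Proof. by rewrite /chain /= big_cons. Qed.

Lemma chain_rcons z xs y : chain z (rcons xs y) = chain z xs + eucl (y - last z xs).
Proof.
elim: xs z => [|x xs IH] z /=; last by rewrite !chain_cons IH addrA.
by rewrite chain_cons /chain big_nil add0r addr0.
Qed.

Lemma admissible_rcons (s : seq R) (a b : R) :
  admissible_pts (rcons s a) -> a < b -> b <= 1 -> admissible_pts (rcons (rcons s a) b).
Proof.
move=> [+ pos] ab b1; rewrite (sorted_pairwise lt_trans) => srt; split.
  rewrite (sorted_pairwise lt_trans) pairwise_rcons srt andbT all_rcons ab/=.
  by move: srt; rewrite pairwise_rcons => /andP[/sub_all-> //] u /lt_trans; apply.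
move: pos; rewrite !all_rcons b1 andbT => /andP[/andP[a0 a1] ->].
by rewrite (lt_trans a0 ab) a0 a1.
Qed.

Definition prefix_var (x : R) : R :=
  sup [set chain 0 (map h (rcons s x)) | s in [set s | admissible_pts (rcons s x)]].

Hypothesis poly_length_le : forall s, admissible_pts s -> poly_length h s <= V.

Lemma chain_le s x : admissible_pts (rcons s x) -> chain 0 (map h (rcons s x)) <= V.
Proof.
move=> adm; apply: le_trans (poly_length_le adm).
have -> : poly_length h (rcons s x) = chain 0 (map h (rcons (rcons s x) 1)) by [].
by rewrite [in X in _ <= X]map_rcons chain_rcons lerDl eucl_ge0.
Qed.

Lemma chain_le_prefix_var s x : admissible_pts (rcons s x) ->
  chain 0 (map h (rcons s x)) <= prefix_var x.
Proof.
move=> adm; apply: ub_le_sup; last by exists s.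
by exists V => _ [s' adm' <-]; exact: chain_le.
Qed.

Lemma prefix_var_le x : 0 < x <= 1 -> prefix_var x <= V.
Proof.
move=> x01; apply: ge_sup.
  by exists (chain 0 [:: h x]), [::] => //; split => //=; rewrite x01.
by move=> _ [s adm <-]; exact: chain_le.
Qed.

Lemma prefix_var_ge_eucl x : 0 < x <= 1 -> eucl (h x) <= prefix_var x.
Proof.
move=> x01; have := @chain_le_prefix_var [::] x; rewrite /= chain_cons subr0.
by rewrite /chain big_nil addr0; apply; split => //=; rewrite x01.
Qed.

Lemma prefix_var_step a b : 0 < a -> a < b -> b <= 1 ->
  prefix_var a + eucl (h b - h a) <= prefix_var b.
Proof.
move=> a0 ab b1; rewrite -lerBrDr; apply: ge_sup.
  by exists (chain 0 [:: h a]), [::] => //; split => //=; rewrite a0 (le_trans (ltW ab)).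
move=> _ [s adm <-]; rewrite lerBrDr.
have := chain_le_prefix_var (admissible_rcons adm ab b1).
by rewrite [in X in X -> _]map_rcons chain_rcons map_rcons last_rcons.
Qed.

Lemma prefix_var_from0 : h x @[x --> 0^'+] --> h 0 ->
  forall b, 0 < b <= 1 -> eucl (h 0) + eucl (h b - h 0) <= prefix_var b.
Proof.
move=> h_rc0 b /andP[b0 b1].
have lim_chain : (fun t => eucl (h t) + eucl (h b - h t)) @ 0^'+ -->
    eucl (h 0) + eucl (h b - h 0).
  apply: cvgD; first exact: continuous_cvg (@eucl_continuous R d (h 0)) h_rc0.
  exact: continuous_cvg (@eucl_continuous R d _) (cvgB (cvg_cst _) h_rc0).
apply: cvgr_to_le lim_chain _; near=> t.
have t0 : 0 < t by near: t; exact: nbhs_right_gt.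
have tb : t < b by near: t; exact: nbhs_right_lt.
have := @chain_le_prefix_var [:: t] b; rewrite /= !chain_cons subr0.
rewrite /chain big_nil addr0; apply; split => /=; first by rewrite tb.
by rewrite t0 b0 b1 (le_trans (ltW tb)).
Unshelve. all: by end_near.
Qed.

End PrefixVariation.

Section ControlFunction.
Variables (R : realType) (d : nat) (h : R -> 'rV[R]_d) (V : R) (z : 'rV[R]_d).

Definition control (x : R) : R :=
  if x < 0 then eucl z else if x == 0 then eucl (h 0)
  else if x <= 1 then prefix_var h x else prefix_var h 1.

Hypothesis poly_length_le : forall s, admissible_pts s -> poly_length h s <= V.
Hypothesis h_cadlag : cadlag h.
Hypothesis z0 : eucl z + eucl (h 0 - z) <= eucl (h 0).
Hypothesis z_pos : forall b, 0 < b <= 1 -> eucl z + eucl (h b - z) <= prefix_var h b.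

Lemma control_pos x : 0 < x <= 1 -> control x = prefix_var h x.
Proof. by move=> /andP[x0 x1]; rewrite /control ltNge (ltW x0) gt_eqF//= x1. Qed.

Lemma control_ge1 x : 1 <= x -> control x = control 1.
Proof.
move=> x1; rewrite [control 1]control_pos ?ltr01 ?lexx//.
rewrite /control ltNge (le_trans ler01 x1).
rewrite gt_eqF ?(lt_le_trans ltr01 x1)//=.
by case: ifP => // x1'; congr prefix_var; apply/eqP; rewrite eq_le x1 x1'.
Qed.

Lemma control_incr a b : 0 <= a -> a <= b -> b <= 1 ->
  eucl (h b - h a) <= control b - control a.
Proof.
move=> a0 ab b1; have [<-|ab'] := eqVneq a b; first by rewrite !subrr eucl0.
have a_lt_b : a < b by rewrite lt_neqAle ab' ab.
rewrite control_pos ?(le_lt_trans a0 a_lt_b)// lerBrDl.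
move: a0; rewrite le_eqVlt => /predU1P[a0|a0].
  rewrite -a0 /control ltxx eqxx; apply: (prefix_var_from0 poly_length_le).
    by apply: h_cadlag.1; rewrite lexx ltr01.
  by rewrite -a0 in a_lt_b; rewrite a_lt_b.
rewrite control_pos ?a0 ?(le_trans ab b1)//.
exact: (prefix_var_step poly_length_le).
Qed.

Lemma control_start a b : a < 0 -> 0 <= b -> b <= 1 ->
  eucl (h b - z) <= control b - control a.
Proof.
move=> a0 b0 b1; rewrite {2}/control a0 lerBrDl.
move: b0; rewrite le_eqVlt => /predU1P[<-|b0].
  by rewrite /control ltxx eqxx; exact: z0.
by rewrite control_pos ?b0 ?b1//; apply: z_pos; rewrite b0 b1.
Qed.

Lemma control_nd : {homo control : x y / x <= y}.
Proof.
have nd01 x y : x <= y -> y <= 1 -> control x <= control y.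
  move=> xy y1; rewrite -subr_ge0; have [x0|x0] := ltP x 0.
    have [y0|y0] := ltP y 0; first by rewrite /control x0 y0 subrr.
    exact: le_trans (eucl_ge0 _) (control_start x0 y0 y1).
  exact: le_trans (eucl_ge0 _) (control_incr x0 xy y1).
move=> x y xy; have [y1|y1] := leP y 1; first exact: nd01.
rewrite (control_ge1 (ltW y1)); have [x1|x1] := leP x 1; first exact: nd01.
by rewrite (control_ge1 (ltW x1)).
Qed.

Lemma control_bnd x : eucl z <= control x <= V.
Proof.
have control1 : control 1 <= V.
  by rewrite control_pos ?ltr01 ?lexx// prefix_var_le ?ltr01 ?lexx.
apply/andP; split.
  have [x0|x0] := ltP x 0; first by rewrite /control x0.
  have -> : eucl z = control (-1) by rewrite /control ltrN10.
  by apply: control_nd; lra.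
have [x1|x1] := leP x 1; last by rewrite control_ge1 ?(ltW x1).
exact: le_trans (control_nd x1) control1.
Qed.

Lemma integral_le_hausdorff_cgraph (g : R -> 'rV[R]_d) (A : set (R * 'rV[R]_d))
    (hm : R -> 'rV[R]_d) :
  (forall s, 0 <= s <= 1 -> A (s, g s)) -> hm 0 = z ->
  (forall t, 0 < t -> hm t = lim (h x @[x --> t^'-])) ->
  (\int[lebesgue_measure]_(s in `[0%R, 1%R]) (eucl (g s - h s))%:E <=
     (2 * d%:R)%:E * ((V - eucl z)%:E + 1) * hausdorff A (cgraph_with hm h)
     + (pi * d%:R)%:E * hausdorff A (cgraph_with hm h) ^+ 2)%E.
Proof.
move=> A_graph hm0 hmE.
apply: (integral_le_hausdorff (w := control) (z := z)) => //.
- exact: control_nd.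
- by move=> a b a0 ab b1; apply: le_trans (normr_le_eucl _) _; exact: control_incr.
- by move=> a b a0 b0 b1; apply: le_trans (normr_le_eucl _) _; exact: control_start.
- exact: h_cadlag.2.
- exact: control_bnd.
Qed.

End ControlFunction.

Theorem lemma4p3 (R : realType) (d : nat) (g h : R -> 'rV[R]_d) :
  BV h -> cadlag g ->
  ((\int[lebesgue_measure]_(s in `[0%R, 1%R]) (eucl (g s - h s))%:E <=
     (2 * d%:R)%:E * (Var h - (eucl (h 0))%:E + 1) * rho2 g h
     + (pi * d%:R)%:E * rho2 g h ^+ 2)%E /\
   (\int[lebesgue_measure]_(s in `[0%R, 1%R]) (eucl (g s - h s))%:E <=
     (2 * d%:R)%:E * (Var h + 1) * rho2' g h
     + (pi * d%:R)%:E * rho2' g h ^+ 2)%E).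
Proof.
move=> [h_cadlag Var_lt] _.
have [V VarE] : exists V, Var h = V%:E.
  have : ((poly_length h [::])%:E <= Var h)%E by apply: ereal_sup_ubound; exists [::].
  by move: Var_lt; case: (Var h) => // V _ _; exists V.
have len_le s : admissible_pts s -> poly_length h s <= V.
  by move=> adm; rewrite -lee_fin -VarE; apply: ereal_sup_ubound; exists s.
have g_graph hm s : 0 <= s <= 1 -> cgraph_with hm g (s, g s).
  by move=> s01; split; [exact: s01 | exact: segment_end].
have h_rc0 : h x @[x --> 0^'+] --> h 0 by apply: h_cadlag.1; rewrite lexx ltr01.
split.
- rewrite VarE -EFinB.
  apply: (integral_le_hausdorff_cgraph len_le h_cadlag _
    (prefix_var_from0 len_le h_rc0) (g_graph _)).
  + by rewrite subrr eucl0 addr0.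
  + by rewrite /leftlim eqxx.
  + by move=> t t0; rewrite /leftlim gt_eqF.
- have z0 : eucl (0 : 'rV_d) + eucl (h 0 - 0) <= eucl (h 0) by rewrite eucl0 add0r subr0.
  have z_pos b : 0 < b <= 1 -> eucl (0 : 'rV_d) + eucl (h b - 0) <= prefix_var h b.
    by move=> b01; rewrite eucl0 add0r subr0; exact: (prefix_var_ge_eucl len_le).
  have := integral_le_hausdorff_cgraph len_le h_cadlag z0 z_pos (g_graph (leftlim' g)).
  rewrite eucl0 subr0 -VarE; apply; first by rewrite /leftlim' eqxx.
  by move=> t t0; rewrite /leftlim' gt_eqF.
Qed.
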